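(* Let $\boldsymbol{\omega}\in\mathbb{R}^d$ satisfy $|\boldsymbol{\omega}\cdot\boldsymbol{\nu}|>\gamma_0|\boldsymbol{\nu}|^{-\tau}$ for all $\boldsymbol{\nu}\in\mathbb{Z}^d\setminus\{\boldsymbol{0}\}$, with $\gamma_0>0$, $\tau>d-1$. Let $\boldsymbol{\nu},\boldsymbol{\nu}'\in\mathbb{Z}^d$ with $\boldsymbol{\nu}\ne\boldsymbol{\nu}'$, and suppose $\delta_j(\boldsymbol{\omega}\cdot\boldsymbol{\nu})=\delta_{j'}(\boldsymbol{\omega}\cdot\boldsymbol{\nu}')$ for some $j,j'\in\{1,\ldots,d\}$. Then either $|\boldsymbol{\nu}-\boldsymbol{\nu}'|\ge|\boldsymbol{\nu}|+|\boldsymbol{\nu}'|-2$ or $|\boldsymbol{\nu}-\boldsymbol{\nu}'|=2$.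
   Context: $|\boldsymbol{\nu}|=|\nu_1|+\cdots+|\nu_d|$. For $j\in\{1,\ldots,d\}$ and $\boldsymbol{\nu}\in\mathbb{Z}^d$, $\delta_j(\boldsymbol{\omega}\cdot\boldsymbol{\nu}):=\min\{|\boldsymbol{\omega}\cdot\boldsymbol{\nu}-\omega_j|,|\boldsymbol{\omega}\cdot\boldsymbol{\nu}+\omega_j|\}=|\boldsymbol{\omega}\cdot(\boldsymbol{\nu}-\sigma(\boldsymbol{\nu},j)\boldsymbol{e}_j)|$, where $\sigma(\boldsymbol{\nu},j)\in\{\pm1\}$ is a minimizer and $\boldsymbol{e}_j$ the $j$-th standard basis vector. *)

From HB Require Import structures.
From mathcomp Require Import all_boot all_order all_algebra.
From mathcomp Require Import all_classical all_reals all_analysis.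
Set Implicit Arguments. Unset Strict Implicit. Unset Printing Implicit Defensive.
Import Order.TTheory GRing.Theory Num.Theory.
Local Open Scope ring_scope.

Definition dotZ (R : realType) (d : nat) (w : 'I_d -> R) (nu : {ffun 'I_d -> int}) : R :=
  \sum_(i < d) w i * (nu i)%:~R.

Definition norm1 (d : nat) (nu : {ffun 'I_d -> int}) : nat :=
  (\sum_(i < d) `|nu i|%N)%N.

Definition subZ (d : nat) (nu nu' : {ffun 'I_d -> int}) : {ffun 'I_d -> int} :=
  [ffun i => nu i - nu' i].

Definition delta (R : realType) (d : nat) (w : 'I_d -> R) (j : 'I_d) (x : R) : R :=
  Num.min `|x - w j| `|x + w j|.

Definition diophantine (R : realType) (d : nat) (w : 'I_d -> R) (gamma0 tau : R) : Prop :=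
  forall nu : {ffun 'I_d -> int}, nu != 0 ->
    gamma0 * powR (norm1 nu)%:R (- tau) < `|dotZ w nu|.

(* Write delta_j(omega . nu) as |omega . (nu - s e_j)| with a sign s = +-1.
   Equal deltas then give omega . mu = 0 for mu = (nu - s e_j) -+ (nu' - s' e_j'),
   and the Diophantine condition forces mu = 0.  With the minus sign,
   nu - nu' = s e_j - s' e_j' is a nonzero vector of l^1 norm 2; with the plus
   sign, nu + nu' = s e_j + s' e_j' has norm at most 2, and the componentwise
   inequality |a| + |b| <= |a + b| + |a - b| gives |nu| + |nu'| <= |nu - nu'| + 2. *)

From HB Require Import structures.
From mathcomp Require Import all_boot all_order all_algebra.
From mathcomp Require Import all_classical all_reals all_analysis.
From mathcomp Require Import zify.
Import Order.TTheory GRing.Theory Num.Theory.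
Local Open Scope ring_scope.

Definition unit_vec {d : nat} (j : 'I_d) : {ffun 'I_d -> int} := [ffun i => (i == j)%:Z].

Lemma subZE {d : nat} (u v : {ffun 'I_d -> int}) : subZ u v = u - v.
Proof. by apply/ffunP => i; rewrite !ffunE. Qed.

Section DotProduct.
Context {R : realType} {d : nat} (w : 'I_d -> R).

Lemma dotZB (u v : {ffun 'I_d -> int}) : dotZ w (u - v) = dotZ w u - dotZ w v.
Proof.
by rewrite /dotZ -sumrB; apply: eq_bigr => i _; rewrite !ffunE rmorphB mulrBr.
Qed.

Lemma dotZMz (u : {ffun 'I_d -> int}) (s : int) : dotZ w (u *~ s) = s%:~R * dotZ w u.
Proof.
rewrite /dotZ mulr_sumr; apply: eq_bigr => i _.
by rewrite ffunMzE rmorphMz -mulrzr mulrA mulrC.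
Qed.

Lemma dotZN (u : {ffun 'I_d -> int}) : dotZ w (- u) = - dotZ w u.
Proof. by rewrite -mulrN1z dotZMz mulN1r. Qed.

Lemma dotZ_unit_vec (j : 'I_d) : dotZ w (unit_vec j) = w j.
Proof.
rewrite /dotZ (bigD1 j) //= big1 => [|i /negbTE]; rewrite ffunE ?eqxx ?mulr1 ?addr0 //.
by move=> ->; rewrite mulr0.
Qed.

Lemma delta_dotZ (j : 'I_d) (nu : {ffun 'I_d -> int}) :
  exists2 s : int, `|s| = 1 & delta w j (dotZ w nu) = `|dotZ w (nu - unit_vec j *~ s)|.
Proof.
rewrite /delta /Num.min /Order.min; case: ifP => _; [exists 1 | exists (-1)];
  by rewrite // dotZB dotZMz dotZ_unit_vec ?mul1r ?mulN1r ?opprK.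
Qed.

Context {gamma0 tau : R}.
Hypotheses (gamma0_ge0 : 0 <= gamma0) (hdio : diophantine w gamma0 tau).

Lemma diophantine_dotZ_eq0 (u : {ffun 'I_d -> int}) : dotZ w u = 0 -> u = 0.
Proof.
move=> u0; apply/eqP; apply: contraT => /hdio; rewrite u0 normr0 ltNge.
by rewrite mulr_ge0 ?powR_ge0.
Qed.

Lemma diophantine_eq_norm_dotZ (u v : {ffun 'I_d -> int}) :
  `|dotZ w u| = `|dotZ w v| -> u = v \/ u = - v.
Proof.
move/eqP; rewrite eqr_norm2 => /orP[] /eqP uv; [left|right];
  apply/eqP; rewrite -subr_eq0; apply/eqP; apply: diophantine_dotZ_eq0.
- by rewrite dotZB uv subrr.
- by rewrite dotZB dotZN uv subrr.
Qed.

End DotProduct.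

Section Norm1.
Context {d : nat}.
Implicit Types (u v : {ffun 'I_d -> int}) (s : int) (j : 'I_d).

Lemma norm1D u v : (norm1 (u + v)%R <= norm1 u + norm1 v)%N.
Proof.
rewrite /norm1 -big_split /=; apply: leq_sum => i _.
by rewrite ffunE; move: (u i) (v i) => a b; lia.
Qed.

Lemma norm1_add_le_norm1DB u v : (norm1 u + norm1 v <= norm1 (u + v)%R + norm1 (u - v)%R)%N.
Proof.
rewrite /norm1 -!big_split /=; apply: leq_sum => i _.
by rewrite !ffunE; move: (u i) (v i) => a b; lia.
Qed.

Lemma norm1_unit_vecMz j s : norm1 (unit_vec j *~ s) = `|s|%N.
Proof.
rewrite /norm1 (bigD1 j) //= big1 => [|i /negbTE ij];
  by rewrite ffunMzE ffunE ?eqxx ?ij mulrzz ?mul1r ?mul0r ?addn0.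
Qed.

Lemma norm1_unit_vecMzD j j' s s' : j != j' ->
  norm1 (unit_vec j *~ s + unit_vec j' *~ s') = (`|s| + `|s'|)%N.
Proof.
move=> jj'; rewrite /norm1 (bigD1 j) //= (bigD1 j') 1?eq_sym //= big1.
  by rewrite !ffunE !ffunMzE !ffunE eqxx (negbTE jj') eq_sym (negbTE jj') eqxx; lia.
move=> i /andP[/negbTE ij /negbTE ij'].
by rewrite !ffunE !ffunMzE !ffunE ij ij' !mulrzz !mul0r addr0.
Qed.

Lemma norm1_sign_unit_vecB j j' s s' : `|s| = 1 -> `|s'| = 1 ->
  unit_vec j *~ s != unit_vec j' *~ s' -> norm1 (unit_vec j *~ s - unit_vec j' *~ s') = 2%N.
Proof.
move=> s1 s'1; have [<- | jj'] := eqVneq j j'.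
  rewrite -mulrzBr norm1_unit_vecMz => ss'.
  have {}ss' : s != s' by apply: contraNneq ss' => ->.
  lia.
by rewrite -mulrNz norm1_unit_vecMzD //; lia.
Qed.

Lemma norm1_sign_unit_vecD_le j j' s s' : `|s| = 1 -> `|s'| = 1 ->
  (norm1 (unit_vec j *~ s + unit_vec j' *~ s')%R <= 2)%N.
Proof.
move=> s1 s'1; apply: leq_trans (norm1D _ _) _.
by rewrite !norm1_unit_vecMz; lia.
Qed.

End Norm1.

Theorem lemma3p1 (R : realType) (d : nat) (w : 'I_d -> R) (gamma0 tau : R)
  (hg : 0 < gamma0) (htau : (d%:R - 1) < tau)
  (hdio : diophantine w gamma0 tau)
  (nu nu' : {ffun 'I_d -> int}) (hne : nu <> nu') (j j' : 'I_d)
  (heq : delta w j (dotZ w nu) = delta w j' (dotZ w nu')) :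
  ((norm1 nu)%:Z + (norm1 nu')%:Z - 2 <= (norm1 (subZ nu nu'))%:Z)%R
  \/ norm1 (subZ nu nu') = 2%N.
Proof.
(* [htau] only ensures that Diophantine vectors exist. *)
have [s s1 hs] := delta_dotZ w j nu.
have [s' s'1 hs'] := delta_dotZ w j' nu'.
rewrite hs hs' in heq; rewrite subZE.
have [same_sign | opposite_sign] := diophantine_eq_norm_dotZ w (ltW hg) hdio _ _ heq.
- right.
  have nuB : nu - nu' = unit_vec j *~ s - unit_vec j' *~ s'.
    by rewrite -[nu](subrK (unit_vec j *~ s)) same_sign addrC addrA addKr addrC.
  by rewrite nuB norm1_sign_unit_vecB // -subr_eq0 -nuB subr_eq0; apply/eqP.
- left.
  have nuD : nu + nu' = unit_vec j *~ s + unit_vec j' *~ s'.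
    by rewrite -[nu](subrK (unit_vec j *~ s)) opposite_sign opprB addrAC subrK addrC.
  have := norm1_add_le_norm1DB nu nu'.
  have := norm1_sign_unit_vecD_le j j' s s' s1 s'1.
  rewrite -nuD; lia.
Qed.
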